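(* If $G$ is a finite non-commutative group equipped with any stable order, then $N^1(G)=\Omega(n)$.
   Context: A stable order on a monoid $M$ is a partial order with $x\le y\Rightarrow zx\le zy$ and $xz\le yz$ for all $z\in M$. Non-deterministic communication complexity: for $f:X\times Y\to\{0,1\}$, $N^1(f)$ is the minimum cost of a non-deterministic protocol for $f$; equivalently, up to an additive constant 2, $N^1(f)=\log_2 C^1(f)$, where $C^1(f)$ is the minimum number of rectangles $S\times T$ on which $f\equiv1$ whose union is $f^{-1}(1)$. An order ideal is a subset $I\subseteq M$ with $y\in I, x\le y\Rightarrow x\in I$. For an order ideal $I$, $N^1(M,I)(n)$ is $N^1$ of the function where Alice receives $m_1,m_3,\dots,m_{2n-1}\in M$, Bob receives $m_2,\dots,m_{2n}\in M$, with value $1$ iff $m_1\cdots m_{2n}\in I$; $N^1(M)(n)=\max_I N^1(M,I)(n)$. Asymptotics are as $n\to\infty$. *)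

From mathcomp Require Import all_boot all_order all_fingroup.
Set Implicit Arguments. Unset Strict Implicit. Unset Printing Implicit Defensive.

Definition stable_order (M : finGroupType) (le : rel M) : Prop :=
  [/\ reflexive le, antisymmetric le, transitive le,
      (forall x y z : M, le x y -> le (z * x)%g (z * y)%g) &
      (forall x y z : M, le x y -> le (x * z)%g (y * z)%g)].

Definition order_ideal (M : finGroupType) (le : rel M) (I : {set M}) : bool :=
  [forall y, [forall x, (y \in I) && le x y ==> (x \in I)]].

Definition one_cover_of_size (X Y : finType) (f : X -> Y -> bool) (k : nat) : bool :=
  [exists R : {ffun 'I_k -> {set X} * {set Y}},
    [forall i, forall x, forall y, (x \in (R i).1) && (y \in (R i).2) ==> f x y] &&
    [forall x, forall y, f x y ==> [exists i, (x \in (R i).1) && (y \in (R i).2)]]].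

(* C^1(f): the minimum such k (a cover with #|X|*#|Y| singleton rectangles
   always exists, so the search below always succeeds). *)
Definition C1 (X Y : finType) (f : X -> Y -> bool) : nat :=
  find (one_cover_of_size f) (iota 0 (#|X| * #|Y|).+1).

(* N^1(f) = ceil(log2 C^1(f)) (equal to the protocol complexity up to an
   additive constant). *)
Definition N1 (X Y : finType) (f : X -> Y -> bool) : nat := up_log 2 (C1 f).

(* The word problem function: Alice holds m1,m3,...,m_{2n-1} (tuple a),
   Bob holds m2,...,m_{2n} (tuple b); value 1 iff m1 m2 ... m_{2n} in I. *)
Definition word_fun (M : finGroupType) (I : {set M}) (n : nat)
  (a b : n.-tuple M) : bool :=
  (\prod_(i < n) (tnth a i * tnth b i))%g \in I.

Definition N1_ideal (M : finGroupType) (I : {set M}) (n : nat) : nat :=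
  N1 (@word_fun M I n).

Definition N1_monoid (M : finGroupType) (le : rel M) (n : nat) : nat :=
  \max_(I : {set M} | order_ideal le I) N1_ideal I n.

From mathcomp Require Import all_boot all_order all_fingroup all_algebra cyclic.
From mathcomp Require Import zify.
Set Implicit Arguments. Unset Strict Implicit. Unset Printing Implicit Defensive.

(* A stable order on a finite group is trivial: 1 <= g forces 1 <= g ^+ k for
   every k, and k = #[g] - 1 gives g <= 1.  Hence every subset is an order
   ideal, in particular I = <[c ^+ p]> for a nontrivial commutator c = [~ g, h]
   and a prime p dividing #[c].  Subsets s, t of {0, ..., n/2 - 1} are encoded
   as words whose j-th block is g^-1 h^-1 g h when j lies in both sets and
   collapses to 1 otherwise, so the word multiplies to c ^+ #|s :&: t|, which is
   in I only if p divides #|s :&: t|.  A rank argument over 'F_p bounds every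
   1-rectangle of this function by 2 ^ (n/2) input pairs, while the 3 ^ (n/2)
   pairs of disjoint subsets are all 1-inputs; so C^1 >= (3/2) ^ (n/2), which
   gives N^1 >= n/5 for n >= 4. *)

Lemma stable_order_eq (G : finGroupType) (le : rel G) :
  stable_order le -> forall x y, le x y -> x = y.
Proof.
case=> le_refl le_anti le_trans le_mull le_mulr x y le_xy.
set g := (y * x^-1)%g.
have le1g : le 1%g g by rewrite -(mulgV x); exact: le_mulr.
have le1X k : le 1%g (g ^+ k)%g.
  elim: k => [|k IHk]; first by rewrite expg0.
  by apply: le_trans le1g _; rewrite expgS -{1}(mulg1 g); exact: le_mull.
have leg1 : le g 1%g.
  by rewrite -(expg_order g) -(prednK (order_gt0 g)) expgS -{1}(mulg1 g); exact: le_mull.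
have /eqP : g = 1%g by apply: le_anti; rewrite le1g leg1.
by rewrite -eq_mulgV1 => /eqP.
Qed.

Lemma order_ideal_stable (G : finGroupType) (le : rel G) (I : {set G}) :
  stable_order le -> order_ideal le I.
Proof.
move=> le_stable; apply/'forall_forallP => y x; apply/implyP => /andP [Iy le_xy].
by rewrite (stable_order_eq le_stable le_xy).
Qed.

Lemma leq_card_bigcup (I T : finType) (P : pred I) (F : I -> {set T}) :
  #|\bigcup_(i | P i) F i| <= \sum_(i | P i) #|F i|.
Proof.
elim/big_ind2: _ => [|m A n B leAm leBn|i _]; rewrite ?cards0 //.
exact: leq_trans (leq_of_leqif (leq_card_setU A B)) (leq_add leAm leBn).
Qed.

Section OneCovers.
Variables (X Y : finType) (f : X -> Y -> bool).

Lemma one_cover_ofP k :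
  reflect (exists R : 'I_k -> {set X} * {set Y},
             (forall i, {in (R i).1 & (R i).2, forall x y, f x y}) /\
             (forall x y, f x y -> exists i, (x \in (R i).1) && (y \in (R i).2)))
          (one_cover_of_size f k).
Proof.
apply: (iffP existsP) => [[R /andP [/forallP Rf /forallP Rcov]] | [R [Rf Rcov]]].
  exists R; split=> [i x y Sx Ty | x y fxy].
    by have /'forall_forallP/(_ x y)/implyP := Rf i; apply; rewrite Sx.
  by have /forallP/(_ y)/implyP/(_ fxy)/existsP := Rcov x.
exists [ffun i => R i]; apply/andP; split.
  apply/forallP => i; apply/'forall_forallP => x y.
  by apply/implyP => /andP []; rewrite ffunE; exact: Rf.
apply/'forall_forallP => x y; apply/implyP => /Rcov [i Ri].
by apply/existsP; exists i; rewrite ffunE.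
Qed.

Lemma C1_one_cover : one_cover_of_size f (C1 f).
Proof.
have cover_pairs : one_cover_of_size f (#|X| * #|Y|).
  apply/one_cover_ofP; rewrite -card_prod.
  pose R (i : 'I_#|{: X * Y}|) := let xy : X * Y := enum_val i in
              if f xy.1 xy.2 then ([set xy.1], [set xy.2]) else (set0, set0).
  exists R; split=> [i x y | x y fxy].
    rewrite /R; case: ifP => [fxy /set1P -> /set1P -> //|_]; by rewrite inE.
  by exists (enum_rank (x, y)); rewrite /R enum_rankK /= fxy !set11.
rewrite /C1; set s := iota 0 _.
have has_cover : has (one_cover_of_size f) s.
  by apply/hasP; exists (#|X| * #|Y|); rewrite // mem_iota ltnS leqnn.
have := nth_find 0 has_cover; rewrite nth_iota ?add0n //.
by rewrite -(size_iota 0 (#|X| * #|Y|).+1) -has_find.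
Qed.

Lemma card_ones_le_cover k b :
  one_cover_of_size f k ->
  (forall (S : {set X}) (T : {set Y}), {in S & T, forall x y, f x y} ->
     #|S| * #|T| <= b) ->
  #|[set xy : X * Y | f xy.1 xy.2]| <= k * b.
Proof.
move=> /one_cover_ofP [R [Rf Rcov]] rect_le.
have sub_cover : [set xy : X * Y | f xy.1 xy.2] \subset \bigcup_i setX (R i).1 (R i).2.
  apply/subsetP => -[x y]; rewrite inE => /Rcov [i Ri].
  by apply/bigcupP; exists i; rewrite ?inE.
apply: leq_trans (subset_leq_card sub_cover) _.
apply: leq_trans (leq_card_bigcup _ _) _.
rewrite -[X in X * b]card_ord -sum_nat_const; apply: leq_sum => i _.
by rewrite cardsX; exact: rect_le (Rf i).
Qed.

End OneCovers.

Lemma one_cover_comp (X Y X' Y' : finType) (f : X -> Y -> bool)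
    (u : X' -> X) (v : Y' -> Y) k :
  one_cover_of_size f k -> one_cover_of_size (fun x y => f (u x) (v y)) k.
Proof.
move=> /one_cover_ofP [R [Rf Rcov]]; apply/one_cover_ofP.
exists (fun i => (u @^-1: (R i).1, v @^-1: (R i).2)); split=> [i x y | x y].
  by rewrite !inE; exact: Rf.
by move=> /Rcov [i Ri]; exists i; rewrite !inE.
Qed.

Import GRing.Theory.

Section IndicatorRows.
Local Open Scope ring_scope.
Variables (F : fieldType) (N : nat).

Definition indicator_row (s : {set 'I_N}) : 'rV[F]_N := \row_j (j \in s)%:R.

Lemma indicator_row_inj : injective indicator_row.
Proof.
move=> s t /matrixP eq_st; apply/setP => j; have := eq_st 0 j; rewrite !mxE.
by case: (j \in s); case: (j \in t) => // /eqP; rewrite ?oner_eq0 // eq_sym oner_eq0.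
Qed.

Lemma indicator_row_dot (s t : {set 'I_N}) :
  (indicator_row s *m (indicator_row t)^T) 0 0 = #|s :&: t|%:R.
Proof.
rewrite !mxE -sum1_card natr_sum [RHS]big_mkcond; apply: eq_bigr => k _.
by rewrite !mxE inE; case: (k \in s); case: (k \in t); rewrite ?mulr1 ?mulr0.
Qed.

(* A vector of the row space of A is determined by its coordinates at the
   \rank A columns of a maximal-rank column submatrix of A. *)
Lemma card_indicator_rows_sub m (A : 'M[F]_(m, N)) :
  (#|[set s | (indicator_row s <= A)%MS]| <= 2 ^ \rank A)%N.
Proof.
set cols := maxrankfun A^T.
have [D defAT] : exists D, A^T = D *m rowsub cols A^T.
  by apply/submxP; rewrite eq_maxrowsub.
have defA : A = colsub cols A *m D^T.
  apply: (can_inj (@trmxK _ _ _)); rewrite trmx_mul trmxK {1}defAT.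
  by congr (_ *m _); apply/matrixP => i j; rewrite !mxE.
have row_of_coords (v : 'rV_N) : (v <= A)%MS -> v = colsub cols v *m D^T.
  by case/submxP => x ->; rewrite -mulmx_colsub -mulmxA -defA.
pose coords (s : {set 'I_N}) : {ffun 'I_(\rank A^T) -> bool} := [ffun k => cols k \in s].
have coords_inj : {in [set s | (indicator_row s <= A)%MS] &, injective coords}.
  move=> s t; rewrite !inE => /row_of_coords eq_s /row_of_coords eq_t eq_coords.
  apply: indicator_row_inj; rewrite eq_s eq_t; congr (_ *m _).
  apply/matrixP => i k; rewrite !mxE.
  by move/ffunP: eq_coords => /(_ k); rewrite !ffunE => ->.
rewrite -(card_in_imset coords_inj) -[\rank A]mxrank_tr.
have -> : (2 ^ \rank A^T)%N = #|{ffun 'I_(\rank A^T) -> bool}|.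
  by rewrite card_ffun card_bool card_ord.
exact: max_card.
Qed.

End IndicatorRows.

(* The indicator rows over 'F_p of the members of S and of T span mutually
   orthogonal subspaces of 'F_p^N, whose dimensions thus add up to at most N. *)
Lemma card_orthogonal_mod_families p N (S T : {set {set 'I_N}}) : prime p ->
  {in S & T, forall s t, p %| #|s :&: t|} -> #|S| * #|T| <= 2 ^ N.
Proof.
move=> p_pr orthST.
pose A := (\matrix_(i < #|S|) indicator_row 'F_p (enum_val i))%R.
pose B := (\matrix_(i < #|T|) indicator_row 'F_p (enum_val i))%R.
have BAT0 : (B *m A^T = 0)%R.
  apply/matrixP => i j; rewrite [RHS]mxE; have := orthST _ _ (enum_valP j) (enum_valP i).
  rewrite setIC (dvdn_pcharf (pchar_Fp p_pr)) -indicator_row_dot => /eqP <-.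
  by rewrite !mxE; apply: eq_bigr => k _; rewrite !mxE.
have rankB : \rank B <= N - \rank A.
  by rewrite -(mxrank_tr A) -mxrank_ker mxrankS // sub_kermx BAT0.
have card_rows (D : {set {set 'I_N}}) (M : 'M_(#|D|, N)) :
    (forall i, row i M = indicator_row 'F_p (enum_val i)) -> #|D| <= 2 ^ \rank M.
  move=> rowM; apply: leq_trans (card_indicator_rows_sub M); apply: subset_leq_card.
  apply/subsetP => s Ds; rewrite inE -(enum_rankK_in Ds Ds) -rowM; exact: row_sub.
have cardS : #|S| <= 2 ^ \rank A by apply: card_rows => i; rewrite rowK.
have cardT : #|T| <= 2 ^ \rank B by apply: card_rows => i; rewrite rowK.
apply: leq_trans (leq_mul cardS cardT) _; rewrite -expnD leq_exp2l //.
by apply: leq_trans (leq_add (leqnn _) rankB) _; rewrite subnKC // rank_leq_col.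
Qed.

Section CommutatorWords.
Variable G : finGroupType.
Implicit Types (x g h : G) (P Q : pred nat).

Definition gadget x P (i : nat) : G :=
  if P i./2 then (if odd i then x else x^-1)%g else 1%g.

Lemma prod_gadget g h P Q m :
  (\prod_(0 <= i < m.*2) (gadget g P i * gadget h Q i))%g =
  ([~ g, h] ^+ (\sum_(0 <= j < m) (P j && Q j)))%g.
Proof.
elim: m => [|m IHm]; first by rewrite !big_geq // expg0.
rewrite doubleS !big_nat_recr //= IHm expgD -mulgA; congr (_ * _)%g.
rewrite /gadget /= odd_double uphalf_double doubleK.
case: (P m); case: (Q m); rewrite /= ?expg0 ?expg1 ?mulg1 ?mul1g ?mulVg //.
by rewrite commgEl /conjg !mulgA.
Qed.

Definition in_ord_set N (s : {set 'I_N}) : pred nat :=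
  fun j => [exists k in s, val k == j].

Lemma in_ord_setE N (s : {set 'I_N}) (k : 'I_N) : in_ord_set s k = (k \in s).
Proof.
apply/existsP/idP => [[k' /andP [s_k' /eqP eq_k]] | s_k].
  by rewrite -(val_inj eq_k).
by exists k; rewrite s_k eqxx.
Qed.

Lemma in_ord_set_ge N (s : {set 'I_N}) j : N <= j -> ~~ in_ord_set s j.
Proof.
move=> leNj; apply/existsP => -[k /andP [_ /eqP eq_k]].
by move: (ltn_ord k); rewrite eq_k ltnNge leNj.
Qed.

(* Block j of a word of length n is the pair of positions 2j, 2j+1; the last
   position of a word of odd length is left trivial. *)
Definition encode_set x n N (s : {set 'I_N}) : n.-tuple G :=
  [tuple gadget x (in_ord_set s) i | i < n].

Lemma word_fun_encode_set g h (I : {set G}) n (s t : {set 'I_(n./2)}) :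
  word_fun I (encode_set g n s) (encode_set h n t) = ([~ g, h] ^+ #|s :&: t| \in I)%g.
Proof.
rewrite /word_fun; under eq_bigr => i _ do rewrite !tnth_mktuple.
rewrite -(big_mkord xpredT (fun i => gadget g _ i * gadget h _ i)%g).
have trivial_tail :
    (gadget g (in_ord_set s) n./2.*2 * gadget h (in_ord_set t) n./2.*2 = 1)%g.
  by rewrite /gadget doubleK !(negPf (in_ord_set_ge _ _)) ?mulg1.
have card_inter : \sum_(k < n./2) (in_ord_set s k && in_ord_set t k) = #|s :&: t|.
  rewrite -sum1_card [RHS]big_mkcond; apply: eq_bigr => k _.
  by rewrite !in_ord_setE inE; case: (_ && _).
rewrite -[in X in \big[_/_]_(0 <= _ < X) _](odd_double_half n).
by case: (odd n);
  rewrite ?add1n ?big_nat_recr //= ?trivial_tail ?mulg1 prod_gadget big_mkord card_inter.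
Qed.

End CommutatorWords.

Lemma dvdn_of_expg_in_cycle (G : finGroupType) (x : G) p k :
  p %| #[x]%g -> (x ^+ k \in <[x ^+ p]>)%g -> p %| k.
Proof.
move=> p_dvd /cycleP [e]; rewrite -expgM => /eqP; rewrite eq_expg_mod_order => /eqP eq_mod.
by rewrite /dvdn -(modn_dvdm k p_dvd) eq_mod modn_dvdm // modnMr.
Qed.

Lemma card_disjoint_set_pairs (T : finType) :
  3 ^ #|T| <= #|[set st : {set T} * {set T} | st.1 :&: st.2 == set0]|.
Proof.
pose pair_of (u : {ffun T -> 'I_3}) := ([set x | val (u x) == 0], [set x | val (u x) == 1]).
have pair_of_inj : injective pair_of.
  move=> u v [/setP eq0 /setP eq1]; apply/ffunP => x; apply: val_inj.
  move: (eq0 x) (eq1 x); rewrite !inE.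
  by case: (u x) => [[|[|[|?]]] ?]; case: (v x) => [[|[|[|?]]] ?].
have := card_imset [set: {ffun T -> 'I_3}] pair_of_inj.
rewrite cardsT card_ffun card_ord => <-; apply: subset_leq_card.
apply/subsetP => _ /imsetP [u _ ->]; rewrite inE; apply/eqP/setP => x.
by rewrite !inE; case: (val (u x)) => [|[]].
Qed.

Lemma C1_commutator_word_ge (G : finGroupType) (g h : G) p n :
  prime p -> p %| #[[~ g, h]]%g ->
  3 ^ n./2 <= C1 (@word_fun _ <[([~ g, h] ^+ p)%g]>%g n) * 2 ^ n./2.
Proof.
move=> p_pr p_dvd; set I := <[_]>%g; set N := n./2.
pose f (s t : {set 'I_N}) := word_fun I (encode_set g n s) (encode_set h n t).
have cover_f : one_cover_of_size f (C1 (@word_fun _ I n)).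
  exact: one_cover_comp (C1_one_cover (@word_fun _ I n)).
apply: leq_trans _ (card_ones_le_cover cover_f _) => [|S T f_ST].
  have disjoint_f : [set st | st.1 :&: st.2 == set0] \subset [set st | f st.1 st.2].
    apply/subsetP => -[s t]; rewrite !inE /f word_fun_encode_set => /eqP ->.
    by rewrite cards0 expg0 group1.
  apply: leq_trans (subset_leq_card disjoint_f).
  by rewrite -{1}[N]card_ord card_disjoint_set_pairs.
apply: card_orthogonal_mod_families p_pr _ => s t Ss Tt.
by apply: dvdn_of_expg_in_cycle p_dvd _; rewrite -word_fun_encode_set; exact: f_ST.
Qed.

Lemma leq_double_up_log N C : 3 ^ N <= C * 2 ^ N -> N <= (up_log 2 C).*2.
Proof.
move=> le3C; set e := up_log 2 C; rewrite leqNgt; apply/negP => lt_eN.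
have le32 : 3 ^ N <= 2 ^ (e + N).
  by apply: leq_trans le3C _; rewrite expnD leq_mul2r up_logP ?orbT.
have : 3 ^ N * 3 ^ N <= 2 ^ (e + N) * 2 ^ (e + N) := leq_mul le32 le32.
rewrite -!expnD leqNgt => /negP; apply.
have lt_exp : 2 ^ (e + N + (e + N)) < 2 ^ (3 * N) by rewrite ltn_exp2l //; lia.
apply: leq_trans lt_exp _; rewrite addnn -mul2n (expnM 2 3 N) (expnM 3 2 N) leq_exp2r //.
by apply: leq_ltn_trans lt_eN.
Qed.

Theorem mainTheorem11 (G : finGroupType) (le : rel G) :
  ~~ abelian [set: G] -> stable_order le ->
  exists c : nat, 0 < c /\ exists n0 : nat,
    forall n : nat, n0 <= n -> n <= c * N1_monoid le n.
Proof.
move=> nonabelian le_stable.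
have [g [h comm_gh]] : exists g h : G, [~ g, h]%g != 1%g.
  case: (pickP [pred gh : G * G | [~ gh.1, gh.2]%g != 1%g]) => [[g h] /= ? | comm_all].
    by exists g, h.
  case/negP: nonabelian; apply/centsP => x _ y _; apply/commgP.
  by have /negbFE := comm_all (x, y).
set p := pdiv #[[~ g, h]]%g.
have p_pr : prime p by rewrite pdiv_prime // order_gt1.
exists 5; split => //; exists 4 => n le4n.
have := leq_double_up_log (C1_commutator_word_ge n p_pr (pdiv_dvd _)).
have : N1_ideal <[([~ g, h] ^+ p)%g]>%g n <= N1_monoid le n.
  exact: leq_bigmax_cond (order_ideal_stable _ le_stable).
rewrite /N1_ideal /N1 => ? ?; have := odd_double_half n; lia.
Qed.
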